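(* Let $G$ be a compact, connected, simply connected simple Lie group with maximal torus $T$, $\mathfrak{h}=\mathrm{Lie}(T)$, simple roots $\Delta=\{a_1,\ldots,a_n\}$, highest root $d$, $\tilde a=-d$, and extended simple roots $\tilde\Delta=\{\tilde a,a_1,\ldots,a_n\}$. Let $g_1,\ldots,g_n$ be the positive integers with $\tilde a^\vee+\sum_{j=1}^n g_j a_j^\vee=0$ (the coroot integers). Let $x=\exp(\tilde x)\in T$ with $\tilde x$ in the closed fundamental alcove $A=\{\xi\in\mathfrak{h}: a_j(\xi)\ge 0\ \forall j,\ d(\xi)\le 1\}$, and suppose that (after renumbering the $a_j$) the set of extended simple roots whose walls contain $\tilde x$ (the simple roots of $Z_G(x)$) is $\Delta_x=\{\tilde a,a_1,\ldots,a_k\}$ with $k<n$. Let $Q^\vee(x)\subseteq Q^\vee$ be the $\mathbb{Z}$-span of the coroots $\tilde a^\vee,a_1^\vee,\ldots,a_k^\vee$ and $\mathfrak{h}(x)\subseteq\mathfrak{h}$ their real linear span. Then, with $N=\gcd(g_{k+1},\ldots,g_n)$, there is an exact sequence $$1\to Q^\vee(x)\to Q^\vee\cap\mathfrak{h}(x)\to\mathbb{Z}/N\mathbb{Z}\to 1.$$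
   Context: $Q^\vee=\sum_j\mathbb{Z}a_j^\vee$ is the coroot lattice, and $\exp:\mathfrak{h}\to T$ is normalized so that its kernel is $Q^\vee$. The wall of $\tilde a$ is $\{\xi: d(\xi)=1\}$ and the wall of $a_j$ is $\{\xi: a_j(\xi)=0\}$. The first map is the inclusion. *)

From HB Require Import structures.
From mathcomp Require Import all_boot all_order all_algebra.
Set Implicit Arguments. Unset Strict Implicit. Unset Printing Implicit Defensive.
Import Order.TTheory GRing.Theory Num.Theory.
Local Open Scope ring_scope.

(* The Cartan subalgebra h is modelled as R^n = 'rV[R]_n (n = rank),
   and the simple coroots a_j^vee are the rows of an invertible matrix C. *)

Definition ext_coroot {R : realFieldType} {n : nat} (C : 'M[R]_n) (g : 'I_n -> nat)
  : 'rV[R]_n := - \sum_(j < n) (g j)%:R *: row j C.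

Definition coroot_lattice {R : realFieldType} {n : nat} (C : 'M[R]_n)
  (v : 'rV[R]_n) : Prop :=
  exists z : 'I_n -> int, v = \sum_(j < n) row j C *~ z j.

Definition coroot_lattice_x {R : realFieldType} {n : nat} (C : 'M[R]_n)
  (g : 'I_n -> nat) (k : nat) (v : 'rV[R]_n) : Prop :=
  exists (z0 : int) (z : 'I_n -> int),
    v = ext_coroot C g *~ z0 + \sum_(j < n | (j < k)%N) row j C *~ z j.

Definition h_x {R : realFieldType} {n : nat} (C : 'M[R]_n)
  (g : 'I_n -> nat) (k : nat) (v : 'rV[R]_n) : Prop :=
  exists (r0 : R) (r : 'I_n -> R),
    v = r0 *: ext_coroot C g + \sum_(j < n | (j < k)%N) r j *: row j C.

(* N = gcd(g_{k+1}, ..., g_n)  (0-indexed: indices j with k <= j < n) *)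
Definition gcd_tail {n : nat} (g : 'I_n -> nat) (k : nat) : nat :=
  \big[gcdn/0%N]_(j < n | (k <= j)%N) g j.

(* In the basis of simple coroots, h(x) consists of the vectors whose tail
   coordinates (indices >= k) are t * g_j for a common real t, and Q^vee(x)
   of those whose head coordinates are integers and whose t is an integer.
   On Q^vee ∩ h(x) every t * g_j is an integer, hence by Bezout so is t * N;
   the map v |-> t * N is additive, its kernel mod N is Q^vee(x), and it is
   onto Z (take tail coordinates m * g_j / N). *)
From HB Require Import structures.
From mathcomp Require Import all_boot all_order all_algebra.
From Stdlib Require Import ClassicalEpsilon.
Set Implicit Arguments. Unset Strict Implicit. Unset Printing Implicit Defensive.
Import Order.TTheory GRing.Theory Num.Theory.
Local Open Scope ring_scope.

Section IntegerValued.
Variable R : numDomainType.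

Definition is_intr (x : R) := exists z : int, x = z%:~R.

Definition intr_inv (x : R) : int :=
  epsilon (inhabits 0) (fun m : int => m%:~R = x).

Lemma intr_invK x : is_intr x -> (intr_inv x)%:~R = x.
Proof.
move=> [z ->]; rewrite /intr_inv.
by apply: (epsilon_spec (inhabits 0) (fun m : int => m%:~R = z%:~R :> R)); exists z.
Qed.

Lemma intr_inv_eq x (m : int) : m%:~R = x -> intr_inv x = m.
Proof. by move=> mx; apply: (@intr_inj R); rewrite intr_invK ?mx //; exists m. Qed.

Lemma is_intr_mul_gcdn (t : R) a b :
  is_intr (t * a%:R) -> is_intr (t * b%:R) -> is_intr (t * (gcdn a b)%:R).
Proof.
move=> [za Ha] [zb Hb]; have [u [w Huw]] := Bezoutz a b.
exists (u * za + w * zb).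
have -> : (gcdn a b)%:R = (gcdz a b)%:~R :> R by [].
rewrite -Huw intrD !intrM mulrDr (mulrCA t u%:~R) (mulrCA t w%:~R).
have -> : t * a%:~R = za%:~R by exact: Ha.
have -> : t * b%:~R = zb%:~R by exact: Hb.
by rewrite intrD !intrM.
Qed.

End IntegerValued.

Section CorootCoordinates.
Variables (R : realFieldType) (n : nat) (C : 'M[R]_n).
Hypothesis C_unit : C \in unitmx.

Definition coord (v : 'rV[R]_n) (j : 'I_n) : R := (v *m invmx C) 0 j.

Lemma sum_scale_rows (a : 'I_n -> R) : \sum_j a j *: row j C = (\row_j a j) *m C.
Proof. by rewrite mulmx_sum_row; apply: eq_bigr => j _; rewrite mxE. Qed.

Lemma coord_sum (a : 'I_n -> R) j : coord (\sum_j a j *: row j C) j = a j.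
Proof. by rewrite sum_scale_rows /coord mulmxK // mxE. Qed.

Lemma coordK v : \sum_j coord v j *: row j C = v.
Proof.
rewrite sum_scale_rows; have -> : \row_j coord v j = v *m invmx C.
  by apply/rowP => j; rewrite mxE.
by rewrite mulmxKV.
Qed.

Lemma coord_inj u v : (forall j, coord u j = coord v j) -> u = v.
Proof. by move=> uv; rewrite -(coordK u) -(coordK v); apply: eq_bigr => j _; rewrite uv. Qed.

Lemma coordD u v j : coord (u + v) j = coord u j + coord v j.
Proof. by rewrite /coord mulmxDl mxE. Qed.

Lemma coroot_latticeP v : coroot_lattice C v <-> forall j, is_intr (coord v j).
Proof.
split=> [[z ->] j | v_int].
  by exists (z j); under eq_bigr do rewrite -scaler_int; rewrite coord_sum.
have [z Hz] := fin_all_exists v_int; exists z.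
by rewrite -[LHS]coordK; apply: eq_bigr => j _; rewrite Hz scaler_int.
Qed.

Variables (g : 'I_n -> nat) (k : nat).

Lemma ext_span_coord (r0 : R) (r : 'I_n -> R) j :
  coord (r0 *: ext_coroot C g + \sum_(i < n | (i < k)%N) r i *: row i C) j =
  (if (j < k)%N then r j else 0) - r0 * (g j)%:R.
Proof.
rewrite /ext_coroot scalerN scaler_sumr -sumrN addrC [X in X + _]big_mkcond.
rewrite -big_split /= -[RHS](coord_sum (fun j => (if (j < k)%N then r j else 0)
  - r0 * (g j)%:R)); congr coord; apply: eq_bigr => i _.
by rewrite scalerA scalerBl; case: ifP => _; rewrite ?scale0r ?add0r.
Qed.

Lemma h_xP v :
  h_x C g k v <-> exists t : R, forall j : 'I_n, (k <= j)%N -> coord v j = t * (g j)%:R.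
Proof.
split=> [[r0 [r ->]] | [t Ht]].
  by exists (- r0) => j; rewrite leqNgt ext_span_coord => /negbTE ->; rewrite sub0r mulNr.
exists (- t), (fun j => coord v j - t * (g j)%:R).
apply: coord_inj => j; rewrite ext_span_coord mulNr opprK.
by case: ltnP => [_ | /Ht ->]; rewrite ?subrK ?add0r.
Qed.

Lemma coroot_lattice_xP v : coroot_lattice_x C g k v <->
  (forall j : 'I_n, (j < k)%N -> is_intr (coord v j)) /\
  exists z0 : int, forall j : 'I_n, (k <= j)%N -> coord v j = z0%:~R * (g j)%:R.
Proof.
split=> [[z0 [z ->]] | [head_int [z0 Hz0]]].
  rewrite -scaler_int; under eq_bigr do rewrite -scaler_int.
  split=> [j jk | ]; first by rewrite ext_span_coord jk; exists (z j - z0 * (g j)%:Z); rewrite intrB intrM.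
  exists (- z0) => j; rewrite leqNgt ext_span_coord => /negbTE ->.
  by rewrite sub0r intrN mulNr.
have [z Hz] : exists z : 'I_n -> int, forall j : 'I_n, (j < k)%N -> coord v j = (z j)%:~R.
  suff /fin_all_exists : forall j : 'I_n, exists zj : int,
    (j < k)%N -> coord v j = zj%:~R by [].
  move=> j; case: (ltnP j k) => [/head_int [zj ->] | _].
    by exists zj.
  by exists 0.
exists (- z0), (fun j => z j - z0 * (g j)%:Z).
rewrite -scaler_int; under eq_bigr do rewrite -scaler_int.
apply: coord_inj => j; rewrite ext_span_coord intrN mulNr opprK.
case: ltnP => [/Hz -> | /Hz0 ->]; last by rewrite add0r.
by rewrite intrB intrM subrK.
Qed.

Lemma coroot_lattice_x_sub v :
  coroot_lattice_x C g k v -> coroot_lattice C v /\ h_x C g k v.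
Proof.
move=> /coroot_lattice_xP [head_int [z0 Hz0]]; split; last first.
  by apply/h_xP; exists z0%:~R.
apply/coroot_latticeP => j; case: (ltnP j k) => [/head_int // | /Hz0 ->].
by exists (z0 * (g j)%:Z); rewrite intrM.
Qed.

End CorootCoordinates.

Lemma gcd_tail_dvd n (g : 'I_n -> nat) k (j : 'I_n) :
  (k <= j)%N -> (gcd_tail g k %| g j)%N.
Proof. by move=> kj; rewrite /gcd_tail (bigD1 j) //= dvdn_gcdl. Qed.

Lemma is_intr_mul_gcd_tail (R : numDomainType) n (g : 'I_n -> nat) k (t : R) :
  (forall j : 'I_n, (k <= j)%N -> is_intr (t * (g j)%:R)) ->
  is_intr (t * (gcd_tail g k)%:R).
Proof.
move=> tail_int; apply: (big_ind (fun a : nat => is_intr (t * a%:R))) => [| a b |].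
  by exists 0; rewrite mulr0.
  exact: is_intr_mul_gcdn.
exact: tail_int.
Qed.

Section TailIndex.
Variables (R : realFieldType) (n : nat) (C : 'M[R]_n) (g : 'I_n -> nat) (k : nat).
Hypotheses (C_unit : C \in unitmx) (g_gt0 : forall j, (0 < g j)%N) (k_lt_n : (k < n)%N).

Let j0 : 'I_n := Ordinal k_lt_n.
Let N := gcd_tail g k.
Let M v := coroot_lattice C v /\ h_x C g k v.

Lemma gcd_tail_gt0 : (0 < N)%N.
Proof. exact: dvdn_gt0 (g_gt0 j0) (@gcd_tail_dvd _ g k j0 (leqnn k)). Qed.

Definition tail_scale v := coord C v j0 / (g j0)%:R.

(* The map Q^vee ∩ h(x) -> Z whose reduction mod N is the quotient map. *)
Definition tail_index v : int := intr_inv (tail_scale v * N%:R).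

Lemma h_x_tail_scale v (j : 'I_n) : h_x C g k v -> (k <= j)%N ->
  coord C v j = tail_scale v * (g j)%:R.
Proof.
have gj0_neq0 : (g j0)%:R != 0 :> R by rewrite pnatr_eq0 -lt0n.
by move=> /(h_xP C_unit) [t Ht] kj; rewrite /tail_scale !Ht // mulfK.
Qed.

Lemma tail_indexE v : M v -> (tail_index v)%:~R = tail_scale v * N%:R.
Proof.
move=> [/(coroot_latticeP C_unit) v_int hv]; apply/intr_invK/is_intr_mul_gcd_tail.
by move=> j kj; rewrite -h_x_tail_scale.
Qed.

Lemma tail_indexD u v : M u -> M v -> tail_index (u + v) = tail_index u + tail_index v.
Proof.
move=> Mu Mv; apply: intr_inv_eq.
rewrite intrD !tail_indexE // -mulrDl; congr (_ * _).
by rewrite /tail_scale coordD mulrDl.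
Qed.

Lemma coroot_lattice_x_tail_index v :
  M v -> coroot_lattice_x C g k v <-> (N%:Z %| tail_index v)%Z.
Proof.
have N_neq0 : N%:R != 0 :> R by rewrite pnatr_eq0 -lt0n gcd_tail_gt0.
move=> Mv; have [/(coroot_latticeP C_unit) v_int hv] := Mv.
split=> [/(coroot_lattice_xP C_unit) [_ [z0 Hz0]] | /dvdzP [q Hq]].
  apply/dvdzP; exists z0; apply: (@intr_inj R).
  by rewrite tail_indexE // intrM /tail_scale Hz0 // mulfK // pnatr_eq0 -lt0n.
apply/(coroot_lattice_xP C_unit); split=> [j _ | ]; first exact: v_int.
exists q => j kj; rewrite h_x_tail_scale //; congr (_ * _).
by apply: (mulIf N_neq0); rewrite -tail_indexE // Hq intrM.
Qed.

Lemma tail_index_onto m : exists v, M v /\ tail_index v = m.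
Proof.
have N_neq0 : N%:R != 0 :> R by rewrite pnatr_eq0 -lt0n gcd_tail_gt0.
pose a (j : 'I_n) : R := if (k <= j)%N then (m * (g j %/ N)%N%:Z)%:~R else 0.
pose v := \sum_j a j *: row j C.
have tail_v (j : 'I_n) : (k <= j)%N -> coord C v j = m%:~R / N%:R * (g j)%:R.
  move=> kj; rewrite coord_sum // /a kj intrM.
  have -> : (g j)%:R = (g j %/ N)%:R * N%:R :> R.
    by rewrite -natrM divnK // gcd_tail_dvd.
  by rewrite [_ * N%:R]mulrC mulrA divfK.
have Mv : M v.
  split; last by apply/(h_xP C_unit); exists (m%:~R / N%:R).
  apply/(coroot_latticeP C_unit) => j; rewrite coord_sum // /a.
  by case: ifP => _; [eexists | exists 0].
exists v; split=> //; apply: intr_inv_eq.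
by rewrite /tail_scale tail_v // mulfK ?divfK // pnatr_eq0 -lt0n.
Qed.

End TailIndex.

Theorem mainTheorem3 (R : realFieldType) (n : nat) (C : 'M[R]_n)
  (g : 'I_n -> nat) (k : nat)
  (hC : C \in unitmx)
  (hg : forall j, (0 < g j)%N)
  (hk : (k < n)%N) :
  let M := fun v => coroot_lattice C v /\ h_x C g k v in
  let N := gcd_tail g k in
  (forall v, coroot_lattice_x C g k v -> M v) /\
  exists phi : 'rV[R]_n -> int,
    (forall u v, M u -> M v -> phi (u + v) = phi u + phi v) /\
    (forall v, M v -> (coroot_lattice_x C g k v <-> (N%:Z %| phi v)%Z)) /\
    (forall m : int, exists v, M v /\ (phi v = m %[mod N%:Z])%Z).
Proof.
move=> M N; split; first exact: coroot_lattice_x_sub.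
exists (tail_index C g hk); split; first exact: tail_indexD.
split; first exact: coroot_lattice_x_tail_index.
by move=> m; have [v [Mv <-]] := tail_index_onto hC hg hk m; exists v.
Qed.
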